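(* Let $S_4=\mathbb{C}P^1\setminus\{p_1,\dots,p_4\}$ with base point $s_0$ and loops $\gamma_1,\dots,\gamma_4$ around the punctures satisfying $\gamma_4\gamma_3\gamma_2\gamma_1=1$. Let $$g_{0,2}=\begin{pmatrix} -\tfrac{1}{2}\sqrt{1+\sqrt{5}-\sqrt{2(1+\sqrt{5})}}& \left( -\sqrt{1+\sqrt{5}-\sqrt{2(1+\sqrt{5})}}\right)^{-1} \\ \tfrac{1}{2}\sqrt{1+\sqrt{5}-\sqrt{2(1+\sqrt{5})}}& \left(-\sqrt{1+\sqrt{5}-\sqrt{2(1+\sqrt{5})}}\right)^{-1}\end{pmatrix},\quad j_0=\frac{1}{\sqrt2}\begin{pmatrix}1&-1\\1&1\end{pmatrix},$$ $J_1=-(g_{0,2})^2$, and $J_{k+1}=j_0J_kj_0^{-1}$ for $k=1,2,3$ (so that $J_4J_3J_2J_1=\mathrm{Id}$). Then the representation $\rho\colon\pi_1(S_4,s_0)\to\mathrm{SL}(2,\mathbb{C})$, $\rho(\gamma_k)=J_k$, is a genus $4$ RSR-representation whose image is contained in the cocompact lattice $\Gamma\subset\mathrm{SL}(2,\mathbb{C})$.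
   Context: Let $\mathbb{T}\subset\mathbb{H}^3$ be the hyperbolic tetrahedron with dihedral angles $\tfrac{\pi}{2},\tfrac{\pi}{2},\tfrac{\pi}{2},\tfrac{\pi}{5},\tfrac{\pi}{3},\tfrac{\pi}{4}$ (the characteristic cell of the order-4 dodecahedral honeycomb $\{5,3,4\}$), let $\mathfrak G$ be the index-2 orientation-preserving subgroup of the Coxeter group generated by the reflections in its faces, and let $\Gamma\subset\mathrm{SL}(2,\mathbb{C})$ be the preimage of $\mathfrak G$ under the double cover $\mathrm{SL}(2,\mathbb{C})\to\mathrm{SO}(3,1)$; $\Gamma$ is a cocompact lattice and $g_{0,2}\in\Gamma$ is a lift of the product of two face reflections. An irreducible representation $\rho$ of $\pi_1(S_4,s_0)$ with $M_j=\rho(\gamma_j)$ is called RSR if: (Real) it takes values in $\mathrm{SL}(2,\mathbb{R})$ and $\mathrm{tr}(M_1M_2),\mathrm{tr}(M_2M_3),\mathrm{tr}(M_1M_3)<-2$; (Symmetric) all $M_j$ lie in the conjugacy class of $\mathrm{diag}(e^{2\pi i\tilde r},e^{-2\pi i\tilde r})$ for some $\tilde r\in(\tfrac14,\tfrac12)$; (Rectangular) $\mathrm{tr}(M_1M_3)=\mathrm{tr}(M_2M_4)$. If the $M_j$ have order $k$, the genus of $\rho$ is $k-1$ for $k$ odd and $\tfrac k2-1$ for $k$ even. *)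

From HB Require Import structures.
From mathcomp Require Import all_boot all_order all_algebra.
From mathcomp Require Import reals trigo complex.
Set Implicit Arguments. Unset Strict Implicit. Unset Printing Implicit Defensive.
Import Order.TTheory GRing.Theory Num.Theory.
Local Open Scope ring_scope.
Local Open Scope complex_scope.

Section Defs.
Variable R : realType.
Local Notation C := R[i].

Definition mx2 (a b c d : C) : 'M[C]_2 :=
  \matrix_(i < 2, j < 2)
    if (i == 0 :> nat) then (if (j == 0 :> nat) then a else b)
    else (if (j == 0 :> nat) then c else d).

Definition adjm (A : 'M[C]_2) : 'M[C]_2 := map_mx (fun z : C => z^*) A^T.
Definition hermitian (X : 'M[C]_2) : Prop := adjm X = X.

Definition s_val : R :=
  Num.sqrt (1 + Num.sqrt 5 - Num.sqrt (2 * (1 + Num.sqrt 5))).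

Definition g02 : 'M[C]_2 :=
  mx2 (- (s_val / 2))%:C ((- s_val)^-1)%:C (s_val / 2)%:C ((- s_val)^-1)%:C.

Definition j0 : 'M[C]_2 := ((Num.sqrt 2)^-1)%:C *: mx2 1 (-1) 1 1.

(* J 1 = -(g02)^2, J (k+1) = j0 J k j0^-1 ; paper indices k = 1..4 *)
Definition Jmat (k : nat) : 'M[C]_2 :=
  iter k.-1 (fun M => j0 *m M *m invmx j0) (- (g02 *m g02)).

Definition idx4 (k : nat) : bool := (1 <= k <= 4)%N.

Definition irreducible4 (M : nat -> 'M[C]_2) : Prop :=
  ~ exists v : 'cV[C]_2, v != 0 /\
      forall k, idx4 k -> exists l : C, M k *m v = l *: v.

Definition real_mx (A : 'M[C]_2) : Prop := forall i j, Im (A i j) = 0.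

Definition RSR_real (M : nat -> 'M[C]_2) : Prop :=
  (forall k, idx4 k -> real_mx (M k) /\ \det (M k) = 1) /\
  \tr (M 1 *m M 2) < -2 /\ \tr (M 2 *m M 3) < -2 /\ \tr (M 1 *m M 3) < -2.

Definition expi (t : R) : C := cos t +i* sin t.

Definition RSR_symmetric (M : nat -> 'M[C]_2) : Prop :=
  exists r : R, 1/4 < r < 1/2 /\
    forall k, idx4 k -> exists P : 'M[C]_2, \det P = 1 /\
      M k = P *m mx2 (expi (2 * pi * r)) 0 0 (expi (- (2 * pi * r))) *m invmx P.

Definition RSR_rectangular (M : nat -> 'M[C]_2) : Prop :=
  \tr (M 1 *m M 3) = \tr (M 2 *m M 4).

Definition RSR (M : nat -> 'M[C]_2) : Prop :=
  irreducible4 M /\ RSR_real M /\ RSR_symmetric M /\ RSR_rectangular M.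

Definition mx_order (A : 'M[C]_2) (k : nat) : Prop :=
  (0 < k)%N /\ A ^+ k = 1 /\ forall m, (0 < m < k)%N -> A ^+ m != 1.

Definition genus_of_order (k : nat) : nat :=
  if odd k then k.-1 else (k./2).-1.

Definition has_genus (M : nat -> 'M[C]_2) (g : nat) : Prop :=
  exists k, (forall j, idx4 j -> mx_order (M j) k) /\ genus_of_order k = g.

(* ---- hyperbolic geometry in the Hermitian-matrix model ----
   H^3 = {X hermitian, det X = 1, X > 0}; the Minkowski form is the
   polarization of det (signature (+,-,-,-)); A in SL(2,C) acts by X |-> A X A^*. *)
Definition mform (X Y : 'M[C]_2) : C := (\det (X + Y) - \det X - \det Y) / 2.

Definition mrefl (n X : 'M[C]_2) : 'M[C]_2 := X - (2 * mform X n / mform n n) *: n.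

(* Coxeter exponents of the characteristic tetrahedron of {5,3,4}:
   linear diagram 0 -5- 1 -3- 2 -4- 3, all other pairs right angles *)
Definition cox_m (i j : 'I_4) : nat :=
  let a := minn i j in let b := maxn i j in
  if (a == 0) && (b == 1) then 5 else
  if (a == 1) && (b == 2) then 3 else
  if (a == 2) && (b == 3) then 4 else 2.

(* n i : unit (det = -1) outward normals of the faces of a hyperbolic tetrahedron
   with dihedral angle pi / cox_m i j between faces i and j *)
Definition tetra_normals (n : 'I_4 -> 'M[C]_2) : Prop :=
  (forall i, hermitian (n i) /\ \det (n i) = -1) /\
  (forall i j, i != j -> mform (n i) (n j) = (cos (pi / (cox_m i j)%:R))%:C).

(* the map f on hermitian matrices lies in the orientation preserving subgroup
   (even-length words) of the Coxeter group generated by the face reflections *)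
Definition in_rot_coxeter (n : 'I_4 -> 'M[C]_2) (f : 'M[C]_2 -> 'M[C]_2) : Prop :=
  exists w : seq 'I_4, ~~ odd (size w) /\
    forall X, hermitian X -> f X = foldr (fun i Y => mrefl (n i) Y) X w.

Definition in_Gamma (n : 'I_4 -> 'M[C]_2) (A : 'M[C]_2) : Prop :=
  \det A = 1 /\ in_rot_coxeter n (fun X => A *m X *m adjm A).

Definition lift_of_two_reflections (n : 'I_4 -> 'M[C]_2) (A : 'M[C]_2) : Prop :=
  \det A = 1 /\ exists a b : 'I_4, a != b /\
    forall X, hermitian X -> A *m X *m adjm A = mrefl (n a) (mrefl (n b) X).

End Defs.

From Pilot Require Import Defs.
From HB Require Import structures.
From mathcomp Require Import all_boot all_order all_algebra.
From mathcomp Require Import reals trigo complex.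
From mathcomp Require Import ring lra zify.
Import Order.TTheory GRing.Theory Num.Theory.
Local Open Scope ring_scope.
Local Open Scope complex_scope.
Set Implicit Arguments. Unset Strict Implicit.

(* Everything is explicit over Q(q, sqrt 2, i), where q = sqrt phi is the square
   root of the golden ratio: q^4 = q^2 + 1, s = q^2 - q^3 + q and
   cos(pi/5) = q^2/2.  The J_k are real, of determinant 1 and of trace
   1 - phi = 2 cos(3pi/5); such a matrix satisfies A^5 = -1, hence has order 10
   (genus 4) and is conjugate to diag(e^{3 pi i/5}, e^{-3 pi i/5}), i.e. r = 3/10.
   The traces tr(J1 J2) = tr(J2 J3) = -2 phi and tr(J1 J3) = tr(J2 J4) = -3 phi
   give the reality and rectangularity conditions, and tr [J1, J2] = 4 + 4 phi <> 2
   rules out a common eigenvector.  In the Hermitian model the reflection in a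
   normal n with det n = -1 is X |-> n adj(X) n, so n_a adj(n_b) lifts the
   rotation refl_a o refl_b; for explicit normals n_0, ..., n_3 of the
   tetrahedron, g_{0,2} and j_0^{+-1} are signed products of such lifts, and
   Gamma is closed under products and signs. *)

Section Mx2.
Variable R : realType.
Local Notation C := R[i].
Implicit Types (a b c d e f g h : C) (A B X : 'M[C]_2).

Lemma mx2_eta A : A = mx2 (A 0 0) (A 0 1) (A 1 0) (A 1 1).
Proof.
apply/matrixP => i j; rewrite mxE.
by case: i => [[|[|]]] // ?; case: j => [[|[|]]] // ? /=; congr (A _ _); apply: val_inj.
Qed.

Lemma mx2_ext A B :
  A 0 0 = B 0 0 -> A 0 1 = B 0 1 -> A 1 0 = B 1 0 -> A 1 1 = B 1 1 -> A = B.
Proof. by move=> *; rewrite [A]mx2_eta [B]mx2_eta; congr mx2. Qed.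

Lemma mx2_01 a b c d : mx2 a b c d 0 1 = b.
Proof. by rewrite mxE. Qed.

Lemma mulmx2 a b c d e f g h :
  mx2 a b c d *m mx2 e f g h =
  mx2 (a * e + b * g) (a * f + b * h) (c * e + d * g) (c * f + d * h).
Proof. by apply: mx2_ext; rewrite !mxE !big_ord_recl big_ord0 !mxE /= addr0. Qed.

Lemma addmx2 a b c d e f g h :
  mx2 a b c d + mx2 e f g h = mx2 (a + e) (b + f) (c + g) (d + h).
Proof. by apply: mx2_ext; rewrite !mxE. Qed.

Lemma oppmx2 a b c d : - mx2 a b c d = mx2 (- a) (- b) (- c) (- d).
Proof. by apply: mx2_ext; rewrite !mxE. Qed.

Lemma scalemx2 k a b c d : k *: mx2 a b c d = mx2 (k * a) (k * b) (k * c) (k * d).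
Proof. by apply: mx2_ext; rewrite !mxE. Qed.

Lemma mx2_1 : (1 : 'M[C]_2) = mx2 1 0 0 1.
Proof. by apply: mx2_ext; rewrite !mxE. Qed.

Lemma det_mx2 a b c d : \det (mx2 a b c d) = a * d - b * c.
Proof.
rewrite (expand_det_row _ 0) !big_ord_recl big_ord0 /cofactor !det_mx11 !mxE /=.
by rewrite expr0 expr1; ring.
Qed.

Lemma tr_mx2 a b c d : \tr (mx2 a b c d) = a + d.
Proof. by rewrite /mxtrace !big_ord_recl big_ord0 !mxE /= addr0. Qed.

Lemma adj_mx2 a b c d : \adj (mx2 a b c d) = mx2 d (- b) (- c) a.
Proof.
apply: mx2_ext; rewrite !mxE /cofactor !det_mx11 !mxE /=.
all: by rewrite ?modn_small //; ring.
Qed.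

Lemma adjm_mx2 a b c d : adjm (mx2 a b c d) = mx2 a^* c^* b^* d^*.
Proof. by apply: mx2_ext; rewrite !mxE. Qed.

Lemma invmx_mx2 a b c d :
  a * d - b * c = 1 -> invmx (mx2 a b c d) = mx2 d (- b) (- c) a.
Proof. by rewrite /invmx unitmxE det_mx2 => ->; rewrite unitr1 invr1 scale1r adj_mx2. Qed.

Lemma mform_mx2 a b c d e f g h :
  mform (mx2 a b c d) (mx2 e f g h) = (a * h + e * d - b * g - c * f) / 2.
Proof. by rewrite /mform addmx2 !det_mx2; congr (_ / _); ring. Qed.

End Mx2.

Section HermitianAction.
Variable R : realType.
Local Notation C := R[i].
Implicit Types A B X m n : 'M[C]_2.

Lemma adjmM A B : adjm (A *m B) = adjm B *m adjm A.
Proof. by rewrite /adjm trmx_mul map_mxM. Qed.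

Lemma adjmK A : adjm (adjm A) = A.
Proof. by apply/matrixP => i j; rewrite !mxE conjcK. Qed.

Lemma adjmN A : adjm (- A) = - adjm A.
Proof. by rewrite /adjm linearN map_mxN. Qed.

Lemma adjm_adj A : adjm (\adj A) = \adj (adjm A).
Proof. by rewrite /adjm trmx_adj map_mx_adj. Qed.

Lemma adjmxM2 A B : \adj (A *m B) = \adj B *m \adj A.
Proof. by rewrite [A]mx2_eta [B]mx2_eta mulmx2 !adj_mx2 mulmx2; congr mx2; ring. Qed.

Lemma adjmxK2 A : \adj (\adj A) = A.
Proof. by rewrite [A]mx2_eta !adj_mx2 !opprK. Qed.

Lemma det_adj2 A : \det (\adj A) = \det A.
Proof. by rewrite [A]mx2_eta adj_mx2 !det_mx2; ring. Qed.

Lemma mform_self X : mform X X = \det X.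
Proof. by rewrite [X]mx2_eta mform_mx2 det_mx2; field. Qed.

(* Polarising [adj(A) A = \det A] gives [n adj(X) n = 2 <X, n> n - \det n X]. *)
Lemma mrefl_adj n X : \det n = -1 -> mrefl n X = n *m \adj X *m n.
Proof.
move=> detn; rewrite /mrefl mform_self detn.
move: detn; rewrite [n]mx2_eta [X]mx2_eta det_mx2 mform_mx2 adj_mx2 !mulmx2.
rewrite scalemx2 oppmx2 addmx2 => detn.
have {}detn : n 0 0 * n 1 1 = n 0 1 * n 1 0 - 1 by rewrite -detn; ring.
by congr mx2; field: detn.
Qed.

Definition herm_act A X := A *m X *m adjm A.

Lemma herm_actM A B X : herm_act (A *m B) X = herm_act A (herm_act B X).
Proof. by rewrite /herm_act adjmM !mulmxA. Qed.

Lemma herm_actN A X : herm_act (- A) X = herm_act A X.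
Proof. by rewrite /herm_act adjmN mulmxN !mulNmx opprK. Qed.

Lemma hermitian_act A X : Defs.hermitian X -> Defs.hermitian (herm_act A X).
Proof. by rewrite /Defs.hermitian /herm_act !adjmM adjmK => ->; rewrite mulmxA. Qed.

Lemma herm_act_refl2 m n X :
  Defs.hermitian m -> Defs.hermitian n -> \det m = -1 -> \det n = -1 ->
  herm_act (m *m \adj n) X = mrefl m (mrefl n X).
Proof.
move=> hm hn dm dn; rewrite !mrefl_adj // /herm_act adjmM adjm_adj hm hn.
by rewrite !adjmxM2 adjmxK2 !mulmxA.
Qed.

End HermitianAction.

Section Gamma.
Variable R : realType.
Local Notation C := R[i].
Variable n : 'I_4 -> 'M[C]_2.
Implicit Types A B : 'M[C]_2.

Lemma in_GammaM A B : in_Gamma n A -> in_Gamma n B -> in_Gamma n (A *m B).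
Proof.
move=> [dA [wA [evA actA]]] [dB [wB [evB actB]]].
split; first by rewrite det_mulmx dA dB mulr1.
exists (wA ++ wB); split; first by rewrite size_cat oddD (negbTE evA).
move=> X hX; rewrite -[LHS]/(herm_act (A *m B) X).
by rewrite herm_actM foldr_cat -(actB X hX); apply: actA; exact: hermitian_act.
Qed.

Lemma in_GammaN A : in_Gamma n A -> in_Gamma n (- A).
Proof.
move=> [dA [w [ev actA]]]; split; first by rewrite -scaleN1r detZ dA mulr1 sqrrN expr1n.
by exists w; split => // X hX; rewrite -[LHS]/(herm_act (- A) X) herm_actN; exact: actA.
Qed.

Hypothesis n_unit : forall i, Defs.hermitian (n i) /\ \det (n i) = -1.

Lemma in_Gamma_refl2 a b : in_Gamma n (n a *m \adj (n b)).
Proof.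
have [[ha da] [hb db]] := (n_unit a, n_unit b).
split; first by rewrite det_mulmx det_adj2 da db mulrNN mulr1.
by exists [:: a; b]; split => // X _; exact: herm_act_refl2.
Qed.

Lemma lift_of_two_reflectionsN a b :
  a != b -> lift_of_two_reflections n (- (n a *m \adj (n b))).
Proof.
move=> ab; have [dA _] := in_GammaN (in_Gamma_refl2 a b).
have [[ha da] [hb db]] := (n_unit a, n_unit b).
split=> //; exists a, b; split => // X _.
by rewrite -[LHS]/(herm_act (- (n a *m \adj (n b))) X); rewrite herm_actN herm_act_refl2.
Qed.

End Gamma.

Section SL2.
Variable R : realType.
Local Notation C := R[i].
Implicit Types (a b c d l m : C) (A B M : 'M[C]_2).

Lemma det_mx2_subr1 M : \det (M - 1) = \det M - \tr M + 1.
Proof. by rewrite [M]mx2_eta mx2_1 oppmx2 addmx2 !det_mx2 tr_mx2; ring. Qed.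

Lemma invmx_eigen M (v : 'cV[C]_2) l :
  M \in unitmx -> v != 0 -> M *m v = l *: v -> l != 0 /\ invmx M *m v = l^-1 *: v.
Proof.
move=> uM v0 Mv; have e : l *: (invmx M *m v) = v by rewrite scalemxAr -Mv mulKmx.
have l0 : l != 0 by apply: contraNneq v0 => l0; rewrite -e l0 scale0r.
by split; rewrite // -[in RHS]e scalerA mulVf // scale1r.
Qed.

Lemma tr_commutator_common_eigen A B (v : 'cV[C]_2) a b :
  A \in unitmx -> B \in unitmx -> v != 0 -> A *m v = a *: v -> B *m v = b *: v ->
  \tr (A *m B *m invmx A *m invmx B) = 2.
Proof.
move=> uA uB v0 Av Bv.
have [a0 Aiv] := invmx_eigen uA v0 Av; have [b0 Biv] := invmx_eigen uB v0 Bv.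
set M := A *m B *m invmx A *m invmx B.
have Mv : (M - 1) *m v = 0.
  have ab : b^-1 / a * b * a = 1 by field; rewrite ?a0 ?b0.
  rewrite mulmxBl mul1mx /M -!mulmxA Biv -!scalemxAr Aiv -!scalemxAr Bv -!scalemxAr Av.
  by rewrite !scalerA ab scale1r subrr.
have detM1 : \det (M - 1) = 0.
  apply/eqP; rewrite -det_tr; apply/det0P; exists v^T; first by rewrite trmx_eq0.
  by rewrite -trmx_mul Mv trmx0.
have detM : \det M = 1.
  have [dA dB] : \det A != 0 /\ \det B != 0 by rewrite -!unitfE -!unitmxE.
  by rewrite /M !det_mulmx !det_inv; field; rewrite dA dB.
by move: detM1; rewrite det_mx2_subr1 detM => /eqP; rewrite addrAC subr_eq0 => /eqP <-.
Qed.

Lemma sl2_diagonalize a b c d l m :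
  a * d - b * c = 1 -> a + d = l + m -> l * m = 1 -> b != 0 -> l != m ->
  exists P : 'M[C]_2, \det P = 1 /\ mx2 a b c d = P *m mx2 l 0 0 m *m invmx P.
Proof.
move=> det1 tr_lm lm1 b0; rewrite eq_sym -subr_eq0 => ml0.
have -> : d = l + m - a by rewrite -tr_lm; ring.
have bc : b * c = a * (l + m - a) - 1 by rewrite -det1 -tr_lm; ring.
(* The columns of [P] are eigenvectors for [l] and [m], scaled so that [\det P = 1]. *)
pose P := mx2 b (1 / (m - l)) (l - a) ((m - a) / (b * (m - l))).
have detP : \det P = 1 by rewrite det_mx2; field; rewrite b0 ml0.
exists P; split => //.
have uP : P \in unitmx by rewrite unitmxE detP unitr1.
have AP : mx2 a b c (l + m - a) *m P = P *m mx2 l 0 0 m.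
  by rewrite !mulmx2; congr mx2; field: bc lm1; rewrite ?b0 ?ml0.
by rewrite -AP mulmxK.
Qed.

(* A trace [t] with [t^2 = t + 1] is [2 cos(pi/5)] or [2 cos(3pi/5)]: the
   eigenvalues are primitive 10th roots of unity. *)
Section GoldenTrace.
Variables (A : 'M[C]_2) (t : C).
Hypotheses (detA : \det A = 1) (trA : \tr A = t) (t_golden : t ^+ 2 = t + 1).
Hypothesis A01 : A 0 1 != 0.

Let golden_trace_entries :
  exists a b c, A = mx2 a b c (t - a) /\ b * c = a * (t - a) - 1 /\ b != 0.
Proof.
move: detA trA; rewrite [A]mx2_eta det_mx2 tr_mx2 => dA tA.
exists (A 0 0), (A 0 1), (A 1 0).
have -> : A 1 1 = t - A 0 0 by rewrite -tA; ring.
by split=> //; split=> //; rewrite -dA -tA; ring.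
Qed.

Lemma expr5_golden_trace : A ^+ 5 = -1.
Proof.
have [a [b [c [-> [bc _]]]]] := golden_trace_entries.
by rewrite !exprS expr0 mulr1 -!mulmxE !mulmx2 mx2_1 oppmx2; congr mx2; ring: bc t_golden.
Qed.

Lemma expr_golden_trace_neq_sign j e : (0 < j < 5)%N -> A ^+ j != (-1) ^+ e.
Proof.
have [a [b [c [-> [bc b0]]]]] := golden_trace_entries.
have t0 : t != 0.
  by apply/eqP => t0; move/eqP: t_golden; rewrite t0 expr0n add0r eq_sym oner_eq0.
have sign01 : ((-1) ^+ e : 'M[C]_2) 0 1 = 0.
  by rewrite -signr_odd; case: (odd e); rewrite ?expr0 ?expr1 !mxE /= ?oppr0.
case/andP; case: j => [|[|[|[|[|j]]]]] // _ _; apply/eqP => /(congr1 (fun M => M 0 1)).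
all: rewrite sign01 !exprS expr0 mulr1 -?mulmxE ?mulmx2 mx2_01 => /eqP; apply/negP.
- by [].
- by apply: contra_neq (mulf_neq0 t0 b0) => <-; ring: bc t_golden.
- by apply: contra_neq (mulf_neq0 t0 b0) => <-; ring: bc t_golden.
- by apply: contra_neq b0 => <-; ring: bc t_golden.
Qed.

Lemma mx_order_golden_trace : mx_order A 10.
Proof.
split=> //; split.
  by rewrite (_ : 10 = 5 * 2)%N // exprM expr5_golden_trace sqrrN expr1n.
move=> m /andP [m0 m10]; apply/negP => /eqP Am.
have Aj : A ^+ (m %% 5) = (-1) ^+ (m %/ 5).
  move: Am; rewrite {1}(divn_eq m 5) exprD mulnC exprM expr5_golden_trace => Am.
  by rewrite -[LHS](signrMK (m %/ 5)) Am mulr1.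
have [j0 | j_pos] := posnP (m %% 5); last first.
  by move: Aj; apply/eqP/expr_golden_trace_neq_sign; rewrite j_pos ltn_mod.
have e1 : (m %/ 5 = 1)%N by move: (divn_eq m 5); rewrite j0; lia.
move: Aj; rewrite j0 e1 expr0 expr1 => /(congr1 (fun M => M 0 0)) /eqP.
by rewrite !mxE /= -subr_eq0 opprK -mulr2n pnatr_eq0.
Qed.

End GoldenTrace.

End SL2.

Section GoldenRatio.
Variable R : realType.

Definition sqrt_phi : R := Num.sqrt ((1 + Num.sqrt 5) / 2).
Local Notation q := sqrt_phi.

Lemma sqrt5_bounds : 2 < Num.sqrt (5 : R) < 3.
Proof.
have s5 : Num.sqrt 5 ^+ 2 = 5 :> R by rewrite sqr_sqrtr // ler0n.
have s5_ge0 : 0 <= Num.sqrt 5 :> R by exact: sqrtr_ge0.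
by apply/andP; split; nra.
Qed.

Lemma sqrt_phi_sq : q ^+ 2 = (1 + Num.sqrt 5) / 2.
Proof. by rewrite sqr_sqrtr //; have /andP[] := sqrt5_bounds; lra. Qed.

Lemma sqrt_phi4 : q ^+ 4 = q ^+ 2 + 1.
Proof.
have s5 : Num.sqrt 5 ^+ 2 = 5 :> R by rewrite sqr_sqrtr // ler0n.
by rewrite (exprM q 2 2) sqrt_phi_sq; field: s5.
Qed.

Lemma sqrt_phi_bounds : 1 < q < 3 / 2.
Proof.
have q_ge0 : 0 <= q by exact: sqrtr_ge0.
have := sqrt_phi_sq; have /andP[] := sqrt5_bounds => ? ? ?.
by apply/andP; split; nra.
Qed.

(* [s^2 = 1 + sqrt 5 - 2 q = (q^2 - q^3 + q)^2], using [sqrt 5 = 2 q^2 - 1] and [q^4 = q^2 + 1]. *)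
Lemma s_val_sqrt_phi : s_val R = q ^+ 2 - q ^+ 3 + q.
Proof.
have [q_gt1 q_lt] := andP sqrt_phi_bounds.
have s5 : Num.sqrt 5 = 2 * q ^+ 2 - 1 by rewrite sqrt_phi_sq; field.
rewrite /s_val.
have -> : 2 * (1 + Num.sqrt 5) = (2 * q) ^+ 2 :> R by rewrite s5; ring.
rewrite sqrtr_sqr ger0_norm; last lra.
have -> : 1 + Num.sqrt 5 - 2 * q = (q ^+ 2 - q ^+ 3 + q) ^+ 2 :> R.
  by rewrite s5; have q4 := sqrt_phi4; ring: q4.
by rewrite sqrtr_sqr ger0_norm //; nra.
Qed.

Lemma cos_pi_div_gt0 (k : R) : 2 < k -> 0 < cos (pi / k).
Proof.
move=> k2; apply: cos_gt0_pihalf; have pi_gt0 := pi_gt0 R.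
have : 0 < pi / k by apply: divr_gt0 => //; lra.
by move=> ?; apply/andP; split; [lra | rewrite ltr_pM2l // ltf_pV2 ?posrE //; lra].
Qed.

Lemma cos_pi_div5 : cos (pi / 5) = q ^+ 2 / 2 :> R.
Proof.
set c := cos (pi / 5).
have c_gt0 : 0 < c by apply: cos_pi_div_gt0; lra.
have cos5 x : cos (x + x + x + x + x) = 16 * cos x ^+ 5 - 20 * cos x ^+ 3 + 5 * cos x.
  by have := sin2cos2 x; rewrite !(cosD, sinD) => s2; ring: s2.
have : cos pi = -1 :> R by exact: cospi.
rewrite (_ : pi = pi / 5 + pi / 5 + pi / 5 + pi / 5 + pi / 5); last by field.
rewrite cos5 -/c => c5.
have : (c + 1) * (4 * c ^+ 2 - 2 * c - 1) ^+ 2 = 16 * c ^+ 5 - 20 * c ^+ 3 + 5 * c + 1.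
  by ring.
rewrite c5 addNr => /eqP; rewrite mulf_eq0 expf_eq0 /= => /orP [/eqP|/eqP c_root]; first lra.
have s5 : Num.sqrt 5 ^+ 2 = 5 :> R by rewrite sqr_sqrtr // ler0n.
have := sqrt5_bounds => /andP [s5_gt2 _].
have : (4 * c - 1 - Num.sqrt 5) * (4 * c - 1 + Num.sqrt 5) = 0.
  by rewrite -[RHS](mulr0 4) -c_root; ring: s5.
by rewrite sqrt_phi_sq => /eqP; rewrite mulf_eq0 => /orP [/eqP|/eqP]; lra.
Qed.

Lemma cos_pi_div3 : cos (pi / 3) = 1 / 2 :> R.
Proof.
set c := cos (pi / 3).
have c_gt0 : 0 < c by apply: cos_pi_div_gt0; lra.
have cos3 x : cos (x + x + x) = 4 * cos x ^+ 3 - 3 * cos x.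
  by have := sin2cos2 x; rewrite !(cosD, sinD) => s2; ring: s2.
have : cos pi = -1 :> R by exact: cospi.
rewrite (_ : pi = pi / 3 + pi / 3 + pi / 3); last by field.
rewrite cos3 -/c => c3.
have : (c + 1) * (2 * c - 1) ^+ 2 = 4 * c ^+ 3 - 3 * c + 1 by ring.
rewrite c3 addNr => /eqP.
by rewrite mulf_eq0 expf_eq0 /= => /orP [/eqP|/eqP]; lra.
Qed.

Lemma cos_pi_div4 : cos (pi / 4) = Num.sqrt 2 / 2 :> R.
Proof.
set c := cos (pi / 4).
have c_gt0 : 0 < c by apply: cos_pi_div_gt0; lra.
have s2 : Num.sqrt 2 ^+ 2 = 2 :> R by rewrite sqr_sqrtr // ler0n.
have s2_gt0 : 0 < Num.sqrt 2 :> R by rewrite sqrtr_gt0 ltr0n.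
have : cos (pi / 4 *+ 2) = 0 :> R by rewrite -mulr_natr -mulrA (_ : 4^-1 * 2 = 2^-1) ?cos_pihalf //; field.
rewrite cos_mulr2n -/c => c2.
have : (c - Num.sqrt 2 / 2) * (c + Num.sqrt 2 / 2) = 0.
  by rewrite -[RHS](mulr0 (1 / 2)) -c2; field: s2.
by move/eqP; rewrite mulf_eq0 => /orP [/eqP|/eqP]; lra.
Qed.

End GoldenRatio.

Section Representation.
Variable R : realType.
Local Notation C := R[i].
Local Notation q := (sqrt_phi R).
Local Notation h := (Num.sqrt 2 / 2 : R).

Let q4C : q%:C ^+ 4 = q%:C ^+ 2 + 1 :> C.
Proof. by rewrite -!rmorphXn sqrt_phi4 rmorphD rmorph1. Qed.

Let sqrt2C : (Num.sqrt 2)%:C ^+ 2 = 2 :> C.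
Proof. by rewrite -rmorphXn sqr_sqrtr ?ler0n // rmorph_nat. Qed.

Let mulii : 'i * 'i = -1 :> C.
Proof. by apply/eqP; rewrite eq_complex /=; apply/andP; split; apply/eqP; ring. Qed.

Let conjc_iC (x : R) : ('i * x%:C)^* = 'i * (- x)%:C.
Proof. by apply/eqP; rewrite eq_complex /=; apply/andP; split; apply/eqP; ring. Qed.

(* Imaginary entries are written ['i * x%:C] so that [conjc_iC] conjugates them. *)
Definition face_normal (k : 'I_4) : 'M[C]_2 :=
  match val k with
  | 0 => mx2 (- h * (q ^+ 3 - q))%:C (- h * q ^+ 2)%:C (- h * q ^+ 2)%:C (- h * (q ^+ 3 - q))%:C
  | 1 => mx2 (- h)%:C h%:C h%:C h%:C
  | 2 => mx2 h%:C ('i * h%:C) ('i * (- h)%:C) (- h)%:C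
  | _ => mx2 0 ('i * (-1)%:C) ('i * 1%:C) 0
  end.

Lemma face_normal_unit k :
  Defs.hermitian (face_normal k) /\ \det (face_normal k) = -1.
Proof.
rewrite /Defs.hermitian /face_normal.
case: k => [[|[|[|[|k]]]] /= _] //; rewrite adjm_mx2 det_mx2 ?conjc0 ?conjc_real ?conjc_iC ?opprK.
all: by split; [congr mx2 | field: q4C sqrt2C mulii].
Qed.

Lemma tetra_normals_face_normal : tetra_normals face_normal.
Proof.
split; first exact: face_normal_unit.
move=> [[|[|[|[|i]]]] hi] // [[|[|[|[|j]]]] hj] // ij; try by move: ij; rewrite eqxx.
all: rewrite /cox_m /= ?cos_pi_div5 ?cos_pi_div3 ?cos_pi_div4 ?cos_pihalf /face_normal /=.
all: by rewrite mform_mx2; field: q4C sqrt2C mulii.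
Qed.

Local Notation n := face_normal.
Local Notation mx2R a b c d := (mx2 a%:C b%:C c%:C d%:C).

Let q4 : q ^+ 4 = q ^+ 2 + 1 := sqrt_phi4 R.

Lemma g02_mx2 :
  g02 R = mx2R (- (q ^+ 2 - q ^+ 3 + q) / 2) (- (q ^+ 2 + q ^+ 3 - q) / 2)
               ((q ^+ 2 - q ^+ 3 + q) / 2) (- (q ^+ 2 + q ^+ 3 - q) / 2).
Proof.
have inv_s : (- s_val R)^-1 = - (q ^+ 2 + q ^+ 3 - q) / 2.
  by apply: mulr1_eq; rewrite s_val_sqrt_phi; field: q4.
by rewrite /g02 inv_s s_val_sqrt_phi; congr mx2; congr _%:C; field.
Qed.

Lemma g02_refl2 : g02 R = - (n 0 *m \adj (n 1)).
Proof.
by rewrite g02_mx2 /face_normal /= adj_mx2 mulmx2 oppmx2; congr mx2; field: q4C sqrt2C.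
Qed.

Lemma j0_mx2 : j0 R = mx2R h (- h) h h.
Proof.
have s2 : Num.sqrt 2 ^+ 2 = 2 :> R by rewrite sqr_sqrtr // ler0n.
rewrite /j0 (_ : (Num.sqrt 2)^-1 = h); last by apply: mulr1_eq; field: s2.
by rewrite scalemx2; congr mx2; ring.
Qed.

Lemma invmx_j0 : invmx (j0 R) = mx2R h h (- h) h.
Proof. by rewrite j0_mx2 invmx_mx2 ?rmorphN ?opprK //; field: sqrt2C. Qed.

Lemma j0_refl2 :
  j0 R = - (n 1 *m \adj (n 2) *m (n 1 *m \adj (n 2)) *m (n 3 *m \adj (n 2)) *m (n 1 *m \adj (n 2))).
Proof.
rewrite j0_mx2 /face_normal /= !adj_mx2 !mulmx2 oppmx2.
by congr mx2; field: sqrt2C mulii.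
Qed.

Lemma invmx_j0_refl2 :
  invmx (j0 R) = - (n 2 *m \adj (n 1) *m (n 2 *m \adj (n 3)) *m (n 2 *m \adj (n 1)) *m (n 2 *m \adj (n 1))).
Proof.
rewrite invmx_j0 /face_normal /= !adj_mx2 !mulmx2 oppmx2.
by congr mx2; field: sqrt2C mulii.
Qed.

Lemma JmatS k : Jmat R k.+2 = j0 R *m Jmat R k.+1 *m invmx (j0 R).
Proof. by rewrite /Jmat iterS. Qed.

Lemma Jmat1 : Jmat R 1 =
  mx2R ((1 + q - q ^+ 2) / 2) (- (1 + q + q ^+ 2) / 2) ((1 - q + q ^+ 2) / 2) ((1 - q - q ^+ 2) / 2).
Proof. by rewrite /Jmat /= g02_mx2 mulmx2 oppmx2; congr mx2; field: q4C. Qed.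

Lemma Jmat2 : Jmat R 2 =
  mx2R ((1 + q - q ^+ 2) / 2) ((-1 + q - q ^+ 2) / 2) ((1 + q + q ^+ 2) / 2) ((1 - q - q ^+ 2) / 2).
Proof.
by rewrite JmatS Jmat1 invmx_j0 j0_mx2 !mulmx2; congr mx2; field: q4C sqrt2C.
Qed.

Lemma Jmat3 : Jmat R 3 =
  mx2R ((1 - q - q ^+ 2) / 2) ((-1 + q - q ^+ 2) / 2) ((1 + q + q ^+ 2) / 2) ((1 + q - q ^+ 2) / 2).
Proof.
by rewrite JmatS Jmat2 invmx_j0 j0_mx2 !mulmx2; congr mx2; field: q4C sqrt2C.
Qed.

Lemma Jmat4 : Jmat R 4 =
  mx2R ((1 - q - q ^+ 2) / 2) (- (1 + q + q ^+ 2) / 2) ((1 - q + q ^+ 2) / 2) ((1 + q - q ^+ 2) / 2).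
Proof.
by rewrite JmatS Jmat3 invmx_j0 j0_mx2 !mulmx2; congr mx2; field: q4C sqrt2C.
Qed.

Lemma Jmat_prod : Jmat R 4 *m Jmat R 3 *m Jmat R 2 *m Jmat R 1 = 1.
Proof. by rewrite Jmat1 Jmat2 Jmat3 Jmat4 !mulmx2 mx2_1; congr mx2; field: q4C. Qed.

Lemma Jmat_in_Gamma k : in_Gamma n (Jmat R k.+1).
Proof.
have refl2 := in_Gamma_refl2 face_normal_unit.
have g02_in : in_Gamma n (g02 R) by rewrite g02_refl2; exact/in_GammaN/refl2.
have j0_in : in_Gamma n (j0 R).
  rewrite j0_refl2; apply/in_GammaN.
  exact: in_GammaM (in_GammaM (in_GammaM (refl2 1 2) (refl2 1 2)) (refl2 3 2)) (refl2 1 2).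
have j0V_in : in_Gamma n (invmx (j0 R)).
  rewrite invmx_j0_refl2; apply/in_GammaN.
  exact: in_GammaM (in_GammaM (in_GammaM (refl2 2 1) (refl2 2 3)) (refl2 2 1)) (refl2 2 1).
elim: k => [|k IHk]; first exact/in_GammaN/(in_GammaM g02_in g02_in).
by rewrite JmatS; exact: in_GammaM (in_GammaM j0_in IHk) j0V_in.
Qed.

Lemma Jmat_real_sl2 k : idx4 k -> exists a b c d : R,
  Jmat R k = mx2R a b c d /\ a * d - b * c = 1 /\ a + d = 1 - q ^+ 2 /\ b < 0.
Proof.
have [q_gt1 q_lt] := andP (sqrt_phi_bounds R).
case/andP; case: k => [|[|[|[|[|k]]]]] // _ _; rewrite ?Jmat1 ?Jmat2 ?Jmat3 ?Jmat4.
all: do 4!eexists; split; first reflexivity.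
all: by split; [field: q4 | split; [field | nra]].
Qed.

Lemma Jmat_det k : idx4 k -> \det (Jmat R k) = 1.
Proof.
move/Jmat_real_sl2 => [a [b [c [d [-> [det1 _]]]]]].
by rewrite det_mx2 -!rmorphM -rmorphB det1.
Qed.

Lemma Jmat_real k : idx4 k -> real_mx (Jmat R k).
Proof.
move/Jmat_real_sl2 => [a [b [c [d [-> _]]]]] i j.
have ImC (x : R) : 'Im (x%:C) = 0.
  by apply/Creal_ImP; rewrite realE -[0]/(0%:C) !lecR; exact: le_total.
by rewrite mxE; case: ifP => _; case: ifP => _; rewrite ImC.
Qed.

Lemma Jmat_order k : idx4 k -> mx_order (Jmat R k) 10.
Proof.
have [q_gt1 q_lt] := andP (sqrt_phi_bounds R).
move=> k4; have := Jmat_det k4; move: k4 => /Jmat_real_sl2 [a [b [c [d [-> [_ [tr1 b_lt0]]]]]]] det1.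
apply: (@mx_order_golden_trace _ _ (1 - q ^+ 2)%:C) => //.
- by rewrite tr_mx2 -rmorphD tr1.
- by field: q4C.
by rewrite mx2_01; apply/eqP => -[b0]; lra.
Qed.

Lemma tr_Jmat12 : \tr (Jmat R 1 *m Jmat R 2) = (- 2 * q ^+ 2)%:C.
Proof. by rewrite Jmat1 Jmat2 mulmx2 tr_mx2; field: q4C. Qed.

Lemma tr_Jmat23 : \tr (Jmat R 2 *m Jmat R 3) = (- 2 * q ^+ 2)%:C.
Proof. by rewrite Jmat2 Jmat3 mulmx2 tr_mx2; field: q4C. Qed.

Lemma tr_Jmat13 : \tr (Jmat R 1 *m Jmat R 3) = (- 3 * q ^+ 2)%:C.
Proof. by rewrite Jmat1 Jmat3 mulmx2 tr_mx2; field: q4C. Qed.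

Lemma tr_Jmat24 : \tr (Jmat R 2 *m Jmat R 4) = (- 3 * q ^+ 2)%:C.
Proof. by rewrite Jmat2 Jmat4 mulmx2 tr_mx2; field: q4C. Qed.

Lemma tr_Jmat_commutator :
  \tr (Jmat R 1 *m Jmat R 2 *m invmx (Jmat R 1) *m invmx (Jmat R 2)) = (4 + 4 * q ^+ 2)%:C.
Proof.
rewrite Jmat1 Jmat2 !invmx_mx2 -?rmorphM -?rmorphB; try by congr _%:C; field: q4.
by rewrite !mulmx2 tr_mx2; field: q4C.
Qed.

Lemma irreducible4_Jmat : irreducible4 (Jmat R).
Proof.
move=> [v [v0 eig]]; have [[l1 e1] [l2 e2]] := (eig 1%N isT, eig 2%N isT).
have unitJ k : idx4 k -> Jmat R k \in unitmx by move/Jmat_det; rewrite unitmxE => ->; exact: unitr1.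
have := tr_commutator_common_eigen (unitJ 1%N isT) (unitJ 2%N isT) v0 e1 e2.
rewrite tr_Jmat_commutator (_ : 2 = (2 : R)%:C) ?rmorph_nat // => -[].
by have := sqrt_phi_bounds R; nra.
Qed.

Lemma RSR_symmetric_Jmat : RSR_symmetric (Jmat R).
Proof.
pose th : R := 2 * pi * (3 / 10).
have cos_th : cos th = (1 - q ^+ 2) / 2.
  rewrite (_ : th = pi - pi / 5 *+ 2); last by rewrite /th -mulr_natr; field.
  by rewrite cosB cospi sinpi cos_mulr2n cos_pi_div5 mul0r addr0; field: q4.
have sin_th : 0 < sin th by apply: sin_gt0_pi; have := pi_gt0 R; rewrite /th => ?; lra.
exists (3 / 10); split; first by apply/andP; split; lra.
move=> k /Jmat_real_sl2 [a [b [c [d [-> [det1 [tr1 b_lt0]]]]]]].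
rewrite -/th; apply: sl2_diagonalize.
- by rewrite -!rmorphM -rmorphB det1.
- apply/eqP; rewrite /expi cosN sinN eq_complex /=; apply/andP; split; apply/eqP.
    by rewrite tr1 cos_th; field.
  by ring.
- apply/eqP; rewrite /expi cosN sinN eq_complex /=; apply/andP; split; apply/eqP.
    by rewrite -(cos2Dsin2 th); ring.
  by ring.
- by apply/eqP => -[b0]; lra.
- by apply/eqP => -[_]; rewrite sinN; lra.
Qed.

Lemma RSR_real_Jmat : RSR_real (Jmat R).
Proof.
split; first by move=> k k4; split; [exact: Jmat_real | exact: Jmat_det].
have q2_gt1 : 1 < q ^+ 2 by have /andP[q_gt1 _] := sqrt_phi_bounds R; nra.
have ltN2 (x : R) : x < -2 -> x%:C < -2.
  by move=> x_lt; rewrite (_ : -2 = (-2 : R)%:C) ?ltcR // rmorphN rmorph_nat.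
by split; [rewrite tr_Jmat12 | split; [rewrite tr_Jmat23 | rewrite tr_Jmat13]]; apply: ltN2; lra.
Qed.

Lemma RSR_Jmat : RSR (Jmat R).
Proof.
split; first exact: irreducible4_Jmat.
split; first exact: RSR_real_Jmat.
split; first exact: RSR_symmetric_Jmat.
by rewrite /RSR_rectangular [LHS]tr_Jmat13 [RHS]tr_Jmat24.
Qed.

Lemma has_genus_Jmat : has_genus (Jmat R) 4.
Proof. by exists 10%N; split=> // k; exact: Jmat_order. Qed.

Lemma lift_of_two_reflections_g02 : lift_of_two_reflections n (g02 R).
Proof. by rewrite g02_refl2; exact: lift_of_two_reflectionsN face_normal_unit _ _ _. Qed.

End Representation.

Local Close Scope complex_scope.

Theorem theorem6p1 (R : realType) :
  Jmat R 4 *m Jmat R 3 *m Jmat R 2 *m Jmat R 1 = 1 /\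
  RSR (Jmat R) /\ has_genus (Jmat R) 4 /\
  exists n : 'I_4 -> 'M[R[i]]_2,
    tetra_normals n /\ lift_of_two_reflections n (g02 R) /\
    forall k, idx4 k -> in_Gamma n (Jmat R k).
Proof.
split; first exact: Jmat_prod.
split; first exact: RSR_Jmat.
split; first exact: has_genus_Jmat.
exists (face_normal R); split; first exact: tetra_normals_face_normal.
split; first exact: lift_of_two_reflections_g02.
by move=> [|k] // _; exact: Jmat_in_Gamma.
Qed.
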